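(* Let $X$ be a finite, connected geometric simplicial complex with vertex set $V$, let $q\in[1,\infty)$, and let $f,g: X\to\mathbb{R}$ be functions each obtained from a function on $V$ by extending linearly over simplices. Let $p$ be a balanced probability distribution on $V$. Let $G^{SP}_f=(V,p,D_f)$ and $G^{SP}_g=(V,p,D_g)$ be the shortest-path measure network representations of the merge trees $T_f$, $T_g$. Then \[ d^{GW}_q(G^{SP}_f,G^{SP}_g) \leq \left(|V|^{2/q}+2\right)\|f-g\|_{L^q(p)}. \]
   Context: Merge tree: for $f: X\to\mathbb{R}$, declare $x\sim y$ if $f(x)=f(y)=a$ and $x,y$ lie in the same connected component of $f^{-1}(-\infty,a]$; the merge tree is $T_f = X/\!\sim$, with $f$ descending to $T_f$. Let $\pi_f:V\to T_f$ be the restricted quotient map. The LCA matrix $W_f(v,w)$ is the maximum value of $f$ along the unique geodesic path from $\pi_f(v)$ to $\pi_f(w)$ in $T_f$. The shortest-path matrix $D_f(v,w)$ is the length of the unique geodesic path from $\pi_f(v)$ to $\pi_f(w)$ in $T_f$, where each tree edge between adjacent points has length equal to the absolute difference of their $f$-values; equivalently $D_f(v,w)=2W_f(v,w)-f(v)-f(w)$. A probability distribution $p$ on $V$ is balanced if $p(u)p(v)\le p(w)$ for all $u,v,w\in V$. $\|h\|_{L^q(p)} = (\sum_{v\in V}|h(v)|^q p(v))^{1/q}$. For finite measure networks $G_i=(V_i,p_i,W_i)$, with $\mathcal{C}(p_1,p_2)$ the nonnegative matrices with row sums $p_1$ and column sums $p_2$, $d^{GW}_q(G_1,G_2) = \tfrac12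 \min_{C\in\mathcal{C}(p_1,p_2)} (\sum_{i,j,k,l} |W_1(i,k)-W_2(j,l)|^q C_{i,j}C_{k,l})^{1/q}$. *)

From HB Require Import structures.
From mathcomp Require Import all_boot all_order all_algebra.
From mathcomp Require Import all_classical all_reals all_analysis.
Set Implicit Arguments. Unset Strict Implicit. Unset Printing Implicit Defensive.
Import Order.TTheory GRing.Theory Num.Theory.
Import numFieldNormedType.Exports.
Local Open Scope classical_set_scope.
Local Open Scope ring_scope.

Definition simplicial_complex (n : nat) (K : set {set 'I_n}) : Prop :=
  [/\ (forall i : 'I_n, K [set i]%SET),
      (forall s, K s -> s != (finset.set0 : {set 'I_n})) &
      (forall s t : {set 'I_n}, K s -> t \subset s -> t != (finset.set0 : {set 'I_n}) -> K t)].

(* Geometric realization of K inside R^n ('rV[R]_n), vertex i = e_i;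
   points are given by barycentric coordinates supported on a simplex. *)
Definition realization (R : realType) (n : nat) (K : set {set 'I_n})
  : set 'rV[R]_n :=
  [set x | exists2 s, K s &
     [/\ (forall i, 0 <= x 0 i), (forall i, i \notin s -> x 0 i = 0)
       & \sum_i x 0 i = 1]].

Definition vtx (R : realType) (n : nat) (i : 'I_n) : 'rV[R]_n :=
  \row_j (j == i)%:R.

Definition pl_ext (R : realType) (n : nat) (f : 'I_n -> R) (x : 'rV[R]_n) : R :=
  \sum_i x 0 i * f i.

(* LCA (merge) value in the merge tree T_F of F : X -> R:
   the least level a at which v and w lie in the same connected component
   of the sublevel set F^{-1}(-oo, a] (= max of F along the geodesic
   between pi(v), pi(w) in T_F). *)
Definition merge_value (R : realType) (T : topologicalType) (X : set T)
  (F : T -> R) (x y : T) : R :=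
  inf [set a : R | connected_component (X `&` [set z | F z <= a]) x y].

Definition lca_matrix (R : realType) (n : nat) (K : set {set 'I_n})
  (f : 'I_n -> R) (v w : 'I_n) : R :=
  merge_value (@realization R n K) (pl_ext f) (vtx R v) (vtx R w).

Definition sp_matrix (R : realType) (n : nat) (K : set {set 'I_n})
  (f : 'I_n -> R) (v w : 'I_n) : R :=
  2 * lca_matrix K f v w - f v - f w.

Definition prob_dist (R : realType) (n : nat) (p : 'I_n -> R) : Prop :=
  (forall i, 0 <= p i) /\ \sum_i p i = 1.

Definition balanced (R : realType) (n : nat) (p : 'I_n -> R) : Prop :=
  forall u v w, p u * p v <= p w.

Definition Lq_norm (R : realType) (n : nat) (p : 'I_n -> R) (q : R)
  (h : 'I_n -> R) : R :=
  (\sum_v (`|h v| `^ q * p v)) `^ q^-1.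

Definition coupling (R : realType) (n m : nat) (p1 : 'I_n -> R) (p2 : 'I_m -> R)
  (C : 'M[R]_(n, m)) : Prop :=
  [/\ (forall i j, 0 <= C i j),
      (forall i, \sum_j C i j = p1 i) &
      (forall j, \sum_i C i j = p2 j)].

(* q-Gromov-Wasserstein distance between (V1,p1,W1) and (V2,p2,W2);
   the minimum over the compact coupling polytope is written as an infimum. *)
Definition dGW (R : realType) (n m : nat) (q : R)
  (p1 : 'I_n -> R) (W1 : 'I_n -> 'I_n -> R)
  (p2 : 'I_m -> R) (W2 : 'I_m -> 'I_m -> R) : R :=
  2^-1 * inf [set c : R | exists2 C : 'M[R]_(n, m), coupling p1 p2 C &
     c = (\sum_i \sum_j \sum_k \sum_l
            (`|W1 i k - W2 j l| `^ q * C i j * C k l)) `^ q^-1].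

(* The merge value of a function on a connected space moves by at most [B]
   when the function moves by at most [B] in sup norm, and linear extension
   over simplices preserves sup-norm bounds; hence, for [h = f - g] and any
   bound [A] on [|h|], [|D_f - D_g|(v, w) <= 2 A + |h v| + |h w|].
   For a balanced [p] the largest mass is at least [1/n] and its square is
   below every mass, so [p >= 1/n^2] and [|h| <= n^(2/q) ||h||_q =: A].
   Evaluating the Gromov-Wasserstein objective at the diagonal coupling and
   applying Minkowski's inequality bounds the distance by [A + ||h||_q]. *)

From HB Require Import structures.
From mathcomp Require Import all_boot all_order all_algebra.
From mathcomp Require Import all_classical all_reals all_analysis.
From mathcomp Require Import ring lra.
Set Implicit Arguments.
Unset Strict Implicit.
Unset Printing Implicit Defensive.

Import Order.TTheory GRing.Theory Num.Theory.
Import numFieldNormedType.Exports.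
Local Open Scope classical_set_scope.
Local Open Scope ring_scope.

Section merge_value.
Variables (R : realType) (T : topologicalType) (X : set T).
Hypothesis connX : connected X.

(* A connected piece of the sublevel set of [G] at level [a] lies in the
   sublevel set of [F] at level [a + B]. The bound [U] makes the infimum for
   [G] range over a nonempty set: at level [U] the sublevel set is all of the
   connected [X]. *)
Lemma merge_value_le_shift (F G : T -> R) (B U : R) x y :
  X x -> X y -> (forall z, X z -> G z <= U) ->
  (forall z, X z -> F z <= G z + B) ->
  merge_value X F x y <= merge_value X G x y + B.
Proof.
move=> Xx Xy GU FGB; rewrite /merge_value -lerBlDr.
set SF := [set a | _]; set SG := [set a | _].
have SG_U : SG U.
  rewrite /SG /=.
  have -> : X `&` [set z | G z <= U] = X.
    by apply/seteqP; split => [z []//|z Xz]; split => //; exact: GU.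
  by rewrite connected_component_id.
have SF_lb : has_lbound SF.
  by exists (F x) => a [C [Cx /(_ x Cx) []]].
apply: lb_le_inf; first by exists U.
move=> a [C [Cx CG Cconn] Cy]; rewrite lerBlDr.
apply: ge_inf => //; exists C => //; split => // z Cz.
have [Xz /= Gz] := CG z Cz; split => //=.
by apply: le_trans (FGB z Xz) _; rewrite lerD2r.
Qed.

Lemma merge_value_dist (F G : T -> R) (B UF UG : R) x y :
  X x -> X y -> (forall z, X z -> F z <= UF) -> (forall z, X z -> G z <= UG) ->
  (forall z, X z -> `|F z - G z| <= B) ->
  `|merge_value X F x y - merge_value X G x y| <= B.
Proof.
move=> Xx Xy FU GU FGB; rewrite ler_distl; apply/andP; split.
- rewrite lerBlDr; apply: (merge_value_le_shift Xx Xy FU) => // z /FGB.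
  by rewrite ler_distl lerBlDr => /andP[].
- apply: (merge_value_le_shift Xx Xy GU) => // z /FGB.
  by rewrite ler_distl => /andP[].
Qed.

End merge_value.

Section linear_extension.
Variables (R : realType) (n : nat) (K : set {set 'I_n}).

Lemma vtx_realization i : simplicial_complex K -> realization K (vtx R i).
Proof.
case=> K1 _ _; exists [set i]%SET => //; split.
- by move=> j; rewrite mxE ler0n.
- by move=> j; rewrite inE mxE => /negbTE ->.
- rewrite (bigD1 i) //= mxE eqxx big1 ?addr0 // => j ji.
  by rewrite mxE (negbTE ji).
Qed.

Lemma pl_extB (f g : 'I_n -> R) z :
  pl_ext f z - pl_ext g z = pl_ext (fun i => f i - g i) z.
Proof. by rewrite /pl_ext -sumrB; apply: eq_bigr => i _; rewrite mulrBr. Qed.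

Lemma pl_ext_norm_le (h : 'I_n -> R) (A : R) z :
  (forall i, `|h i| <= A) -> realization K z -> `|pl_ext h z| <= A.
Proof.
move=> hA [s _ [z_ge0 _ z1]].
apply: le_trans (ler_norm_sum _ _ _) _.
rewrite -[leRHS]mul1r -z1 mulr_suml; apply: ler_sum => i _.
by rewrite normrM ger0_norm // ler_wpM2l.
Qed.

Lemma pl_ext_le_sum_norm (f : 'I_n -> R) z :
  realization K z -> pl_ext f z <= \sum_j `|f j|.
Proof.
move=> Xz; apply: le_trans (ler_norm _) _; apply: pl_ext_norm_le => // i.
by rewrite (bigD1 i) //= lerDl sumr_ge0.
Qed.

Lemma lca_matrix_dist (f g : 'I_n -> R) (A : R) v w :
  simplicial_complex K -> connected (@realization R n K) ->
  (forall i, `|f i - g i| <= A) ->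
  `|lca_matrix K f v w - lca_matrix K g v w| <= A.
Proof.
move=> sK cX fgA.
apply: merge_value_dist => //; try exact: vtx_realization.
- exact: pl_ext_le_sum_norm.
- exact: pl_ext_le_sum_norm.
- by move=> z Xz; rewrite pl_extB pl_ext_norm_le.
Qed.

Lemma sp_matrix_dist (f g : 'I_n -> R) (A : R) v w :
  simplicial_complex K -> connected (@realization R n K) ->
  (forall i, `|f i - g i| <= A) ->
  `|sp_matrix K f v w - sp_matrix K g v w|
    <= 2 * A + `|f v - g v| + `|f w - g w|.
Proof.
move=> sK cX fgA; have := lca_matrix_dist v w sK cX fgA.
rewrite /sp_matrix; set a := lca_matrix K f v w; set b := lca_matrix K g v w.
move=> ab_le.
have -> : 2 * a - f v - f w - (2 * b - g v - g w)
          = 2 * (a - b) - (f v - g v) - (f w - g w) by ring.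
do 2 (apply: le_trans (ler_normB _ _) _; rewrite lerD2r).
by rewrite normrM ger0_norm // ler_wpM2l.
Qed.

End linear_extension.

Lemma powRK (R : realType) (x r : R) : r != 0 -> 0 <= x -> (x `^ r) `^ r^-1 = x.
Proof. by move=> r0 x0; rewrite -powRrM mulfV // powRr1. Qed.

Lemma powR_convex (R : realType) (q t x y : R) :
  1 <= q -> 0 <= t <= 1 -> 0 <= x -> 0 <= y ->
  (t * x + (1 - t) * y) `^ q <= t * x `^ q + (1 - t) * y `^ q.
Proof.
move=> q1 /andP[t0 t1] x0 y0.
have := @convex_powR R q q1 (Itv01 t0 t1) x y.
by rewrite !inE /= !in_itv /= !andbT !convRE => /(_ x0 y0).
Qed.

Section Lq_norm.
Variables (R : realType) (n : nat) (p : 'I_n -> R) (q : R).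
Hypotheses (p_ge0 : forall i, 0 <= p i) (q_ge1 : 1 <= q).

Let q_gt0 : 0 < q. Proof. by rewrite (lt_le_trans ltr01). Qed.
Let q_ge0 : 0 <= q. Proof. exact: ltW. Qed.
Let qV_ge0 : 0 <= q^-1. Proof. by rewrite invr_ge0. Qed.

Let sum_ge0 (h : 'I_n -> R) : 0 <= \sum_v `|h v| `^ q * p v.
Proof. by apply: sumr_ge0 => v _; rewrite mulr_ge0 ?powR_ge0. Qed.

Lemma Lq_norm_ge0 h : 0 <= Lq_norm p q h.
Proof. exact: powR_ge0. Qed.

Lemma Lq_norm_powR h : Lq_norm p q h `^ q = \sum_v `|h v| `^ q * p v.
Proof. by rewrite -powRrM mulVf ?gt_eqF // powRr1. Qed.

Lemma Lq_norm_le1 h : (Lq_norm p q h <= 1) = (\sum_v `|h v| `^ q * p v <= 1).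
Proof.
have one_powR r : 1 `^ r = 1 :> R by rewrite powR1.
apply/idP/idP => [N1|S1].
- rewrite -Lq_norm_powR -(one_powR q).
  by apply: ge0_ler_powR; rewrite ?nnegrE ?Lq_norm_ge0.
- rewrite /Lq_norm -(one_powR q^-1).
  by apply: ge0_ler_powR; rewrite ?nnegrE ?sum_ge0.
Qed.

Lemma Lq_norm_le h1 h2 : (forall i, 0 < p i -> `|h1 i| <= `|h2 i|) ->
  Lq_norm p q h1 <= Lq_norm p q h2.
Proof.
move=> h12; apply: ge0_ler_powR; rewrite ?nnegrE ?sum_ge0 //.
apply: ler_sum => i _; have [pi0|pi_gt0] := eqVneq (p i) 0.
  by rewrite pi0 !mulr0.
rewrite ler_wpM2r //; apply: ge0_ler_powR; rewrite ?nnegrE //.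
by apply: h12; rewrite lt_def pi_gt0 p_ge0.
Qed.

Lemma Lq_norm_eq0 h : Lq_norm p q h = 0 -> forall i, 0 < p i -> h i = 0.
Proof.
move=> N0 i pi; have S0 : \sum_v `|h v| `^ q * p v = 0.
  by rewrite -Lq_norm_powR N0 powR0 ?gt_eqF.
have term_ge0 v : 0 <= `|h v| `^ q * p v by rewrite mulr_ge0 ?powR_ge0.
have /eqP := psumr_eq0P (fun v _ => term_ge0 v) S0 (i := i) isT.
rewrite mulf_eq0 (gt_eqF pi) orbF powR_eq0 normr_eq0 (gt_eqF q_gt0).
by rewrite andbT => /eqP.
Qed.

Lemma Lq_norm_abs h : Lq_norm p q (fun i => `|h i|) = Lq_norm p q h.
Proof. by rewrite /Lq_norm; under eq_bigr do rewrite normr_id. Qed.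

Lemma Lq_normZ c h : Lq_norm p q (fun i => c * h i) = `|c| * Lq_norm p q h.
Proof.
rewrite /Lq_norm; under eq_bigr do rewrite normrM powRM // -mulrA.
by rewrite -mulr_sumr powRM ?sum_ge0 // powRK ?gt_eqF.
Qed.

Lemma Lq_norm_convex_le1 t F G : 0 <= t <= 1 ->
  Lq_norm p q F <= 1 -> Lq_norm p q G <= 1 ->
  Lq_norm p q (fun i => t * F i + (1 - t) * G i) <= 1.
Proof.
move=> t01 F1 G1; have /andP[t0 t1] := t01.
rewrite Lq_norm_le1; rewrite Lq_norm_le1 in F1; rewrite Lq_norm_le1 in G1.
have t'0 : 0 <= 1 - t by rewrite subr_ge0.
apply: le_trans (_ : \sum_v (t * `|F v| `^ q + (1 - t) * `|G v| `^ q) * p v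
                     <= _).
  apply: ler_sum => v _; rewrite ler_wpM2r //.
  apply: le_trans _ (powR_convex q_ge1 t01 (normr_ge0 (F v)) (normr_ge0 (G v))).
  apply: ge0_ler_powR => //; rewrite ?nnegrE ?addr_ge0 ?mulr_ge0 //.
  apply: le_trans (ler_normD _ _) _.
  by rewrite !normrM (ger0_norm t0) (ger0_norm t'0).
under eq_bigr do rewrite mulrDl -!mulrA.
rewrite big_split /= -!mulr_sumr.
apply: le_trans (lerD (ler_wpM2l t0 F1) (ler_wpM2l t'0 G1)) _.
by rewrite !mulr1 subrKC.
Qed.

(* The usual proof: [F + G] is [a + b] times a convex combination of the
   unit vectors [F / a] and [G / b]. *)
Lemma minkowski_Lq_norm F G :
  Lq_norm p q (fun i => F i + G i) <= Lq_norm p q F + Lq_norm p q G.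
Proof.
move Fa : (Lq_norm p q F) => a; move Gb : (Lq_norm p q G) => b.
have [a0|a_neq0] := eqVneq a 0.
  rewrite a0 add0r -Gb; apply: Lq_norm_le => i pi.
  by rewrite a0 in Fa; rewrite (Lq_norm_eq0 Fa pi) add0r.
have [b0|b_neq0] := eqVneq b 0.
  rewrite b0 addr0 -Fa; apply: Lq_norm_le => i pi.
  by rewrite b0 in Gb; rewrite (Lq_norm_eq0 Gb pi) addr0.
have a_gt0 : 0 < a by rewrite lt_def a_neq0 -Fa Lq_norm_ge0.
have b_gt0 : 0 < b by rewrite lt_def b_neq0 -Gb Lq_norm_ge0.
have ab_gt0 : 0 < a + b := addr_gt0 a_gt0 b_gt0.
set t := a / (a + b).
have t01 : 0 <= t <= 1.
  rewrite divr_ge0 ?(ltW a_gt0) ?(ltW ab_gt0) //=.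
  by rewrite ler_pdivrMr // mul1r lerDl (ltW b_gt0).
have unit_ball (h : 'I_n -> R) c : 0 < c -> Lq_norm p q h = c ->
    Lq_norm p q (fun i => c^-1 * `|h i|) <= 1.
  move=> c_gt0 hc; rewrite (Lq_normZ c^-1 (fun i => `|h i|)) Lq_norm_abs hc.
  by rewrite gtr0_norm ?invr_gt0 // mulVf ?gt_eqF.
have split i : `|F i| + `|G i|
    = (a + b) * (t * (a^-1 * `|F i|) + (1 - t) * (b^-1 * `|G i|)).
  by rewrite /t; field; rewrite (gt_eqF a_gt0) (gt_eqF b_gt0) (gt_eqF ab_gt0).
apply: le_trans (_ : Lq_norm p q (fun i => (a + b) *
    (t * (a^-1 * `|F i|) + (1 - t) * (b^-1 * `|G i|))) <= _).
  apply: Lq_norm_le => i _; rewrite -split [leRHS]ger0_norm ?addr_ge0 //.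
  exact: ler_normD.
rewrite Lq_normZ gtr0_norm // -[leRHS]mulr1 ler_wpM2l ?(ltW ab_gt0) //.
by apply: Lq_norm_convex_le1 => //; apply: unit_ball.
Qed.

Hypothesis p_sum1 : \sum_i p i = 1.

Lemma Lq_norm_cst c : Lq_norm p q (fun=> c) = `|c|.
Proof.
by rewrite /Lq_norm -mulr_sumr p_sum1 mulr1 powRK ?gt_eqF.
Qed.

(* Minkowski's inequality in [k] for each fixed [i], then in [i]. *)
Lemma Lq_norm_pairs_le (W : 'I_n -> 'I_n -> R) (u : 'I_n -> R) :
  (forall i, 0 <= u i) -> (forall i k, `|W i k| <= u i + u k) ->
  (\sum_i \sum_k `|W i k| `^ q * p i * p k) `^ q^-1 <= 2 * Lq_norm p q u.
Proof.
move=> u_ge0 Wu; set N := Lq_norm p q u.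
have N_ge0 : 0 <= N := Lq_norm_ge0 u.
have shift_le c : 0 <= c -> \sum_k (c + u k) `^ q * p k <= (c + N) `^ q.
  move=> c_ge0.
  have -> : \sum_k (c + u k) `^ q * p k = Lq_norm p q (fun k => c + u k) `^ q.
    by rewrite Lq_norm_powR; apply: eq_bigr => k _; rewrite ger0_norm ?addr_ge0.
  apply: ge0_ler_powR; rewrite ?nnegrE ?Lq_norm_ge0 ?addr_ge0 //.
  by apply: le_trans (minkowski_Lq_norm _ _) _; rewrite Lq_norm_cst ger0_norm.
have sum_le : \sum_i \sum_k `|W i k| `^ q * p i * p k <= (2 * N) `^ q.
  apply: le_trans (_ : \sum_i \sum_k (u i + u k) `^ q * p i * p k <= _).
    apply: ler_sum => i _; apply: ler_sum => k _; rewrite !ler_wpM2r //.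
    by apply: ge0_ler_powR; rewrite ?nnegrE ?addr_ge0.
  apply: le_trans (_ : \sum_i (N + u i) `^ q * p i <= _); last first.
    by rewrite mulr_natl mulr2n; apply: shift_le.
  apply: ler_sum => i _; under eq_bigr do rewrite mulrAC.
  by rewrite -mulr_suml addrC ler_wpM2r // shift_le.
rewrite -[leRHS](@powRK _ _ q) ?mulr_ge0 ?gt_eqF //.
apply: ge0_ler_powR; rewrite ?nnegrE ?powR_ge0 //.
by do 2 (apply: sumr_ge0 => ? _); rewrite !mulr_ge0 ?powR_ge0.
Qed.

End Lq_norm.

Section balanced.
Variables (R : realType) (n : nat) (p : 'I_n -> R).
Hypotheses (p_prob : prob_dist p) (p_bal : balanced p).

Lemma balanced_ge v : 1 <= n%:R ^+ 2 * p v.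
Proof.
have [p_ge0 p_sum1] := p_prob.
have [u _ p_le_pu] := @arg_maxP _ _ _ v xpredT p isT.
have npu_ge1 : 1 <= n%:R * p u.
  rewrite -{1}p_sum1; apply: le_trans (_ : \sum_(i : 'I_n) p u <= _).
    by apply: ler_sum => i _; exact: p_le_pu.
  by rewrite sumr_const card_ord mulr_natl.
apply: le_trans (_ : (n%:R * p u) ^+ 2 <= _); first by rewrite expr2; nra.
by rewrite exprMn ler_wpM2l ?exprn_ge0 ?ler0n // expr2; exact: p_bal.
Qed.

Lemma norm_le_Lq_norm (q : R) (h : 'I_n -> R) v : 1 <= q ->
  `|h v| <= n%:R `^ (2 / q) * Lq_norm p q h.
Proof.
move=> q_ge1; have q_gt0 : 0 < q by rewrite (lt_le_trans ltr01).
have [p_ge0 _] := p_prob.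
set S := \sum_w `|h w| `^ q * p w.
have S_ge0 : 0 <= S by apply: sumr_ge0 => w _; rewrite mulr_ge0 ?powR_ge0.
have hv_le : `|h v| `^ q <= n%:R ^+ 2 * S.
  apply: le_trans (_ : `|h v| `^ q * (n%:R ^+ 2 * p v) <= _).
    by rewrite -{1}[_ `^ q]mulr1 ler_wpM2l ?powR_ge0 ?balanced_ge.
  rewrite mulrCA ler_wpM2l ?exprn_ge0 ?ler0n //.
  by rewrite /S (bigD1 v) //= lerDl sumr_ge0 // => w _; rewrite mulr_ge0 ?powR_ge0.
rewrite -(@powRK _ `|h v| q) ?gt_eqF //.
apply: le_trans (_ : (n%:R ^+ 2 * S) `^ q^-1 <= _).
  apply: ge0_ler_powR; rewrite ?nnegrE ?invr_ge0 ?powR_ge0 ?(ltW q_gt0) //.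
  by rewrite mulr_ge0 ?exprn_ge0 ?ler0n.
rewrite powRM ?exprn_ge0 ?ler0n // -powR_mulrn ?ler0n // -powRrM.
by rewrite mulrC.
Qed.

End balanced.

Lemma coupling_diag_mx (R : realType) n (p : 'I_n -> R) :
  (forall i, 0 <= p i) -> coupling p p (diag_mx (\row_i p i)).
Proof.
move=> p_ge0; split.
- by move=> i j; rewrite !mxE mulrn_wge0.
- move=> i; rewrite (bigD1 i) //= big1 ?addr0 ?mxE ?eqxx // => j ji.
  by rewrite !mxE eq_sym (negbTE ji).
- move=> j; rewrite (bigD1 j) //= big1 ?addr0 ?mxE ?eqxx // => i ij.
  by rewrite !mxE (negbTE ij).
Qed.

Lemma sum_diag_mx4 (R : realType) n (p : 'I_n -> R)
    (X : 'I_n -> 'I_n -> 'I_n -> 'I_n -> R) :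
  \sum_i \sum_j \sum_k \sum_l
      X i j k l * diag_mx (\row_i p i) i j * diag_mx (\row_i p i) k l
    = \sum_i \sum_k X i i k k * p i * p k.
Proof.
set C := diag_mx _; have C_off i j : i != j -> C i j = 0.
  by move=> ij; rewrite !mxE (negbTE ij).
have C_diag i : C i i = p i by rewrite !mxE eqxx.
apply: eq_bigr => i _; rewrite (bigD1 i) //= [X in _ + X]big1 ?addr0; last first.
  move=> j ji; apply: big1 => k _; apply: big1 => l _.
  by rewrite (C_off i j) 1?eq_sym // mulr0 mul0r.
apply: eq_bigr => k _; rewrite (bigD1 k) //= [X in _ + X]big1 ?addr0.
  by rewrite !C_diag.
by move=> l lk; rewrite (C_off k l) 1?eq_sym // mulr0.
Qed.

Lemma dGW_le_diag (R : realType) n (q : R) (p : 'I_n -> R)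
    (W1 W2 : 'I_n -> 'I_n -> R) : (forall i, 0 <= p i) ->
  dGW q p W1 p W2
    <= 2^-1 * (\sum_i \sum_k `|W1 i k - W2 i k| `^ q * p i * p k) `^ q^-1.
Proof.
move=> p_ge0; rewrite ler_wpM2l ?invr_ge0 //.
apply: ge_inf; first by exists 0 => c [C _ ->]; rewrite powR_ge0.
exists (diag_mx (\row_i p i)); first exact: coupling_diag_mx.
by rewrite (sum_diag_mx4 p (fun i j k l => `|W1 i k - W2 j l| `^ q)).
Qed.

Theorem corollary1 (R : realType) (n : nat) (K : set {set 'I_n})
  (q : R) (f g p : 'I_n -> R) :
  simplicial_complex K ->
  connected (@realization R n K) ->
  1 <= q ->
  prob_dist p ->
  balanced p ->
  dGW q p (sp_matrix K f) p (sp_matrix K g)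
    <= (n%:R `^ (2 / q) + 2) * Lq_norm p q (fun v => f v - g v).
Proof.
move=> sK cX q_ge1 p_prob p_bal; have [p_ge0 p_sum1] := p_prob.
set h := fun v => f v - g v; set N := Lq_norm p q h.
set A := n%:R `^ (2 / q) * N.
have N_ge0 : 0 <= N := Lq_norm_ge0 p q h.
have A_ge0 : 0 <= A by rewrite mulr_ge0 ?powR_ge0.
have h_le_A i : `|h i| <= A := norm_le_Lq_norm p_prob p_bal h i q_ge1.
pose u i := A + `|h i|.
have u_ge0 i : 0 <= u i by rewrite addr_ge0.
have D_le i k : `|sp_matrix K f i k - sp_matrix K g i k| <= u i + u k.
  apply: le_trans (sp_matrix_dist i k sK cX h_le_A) _.
  by rewrite /u addrACA mulr_natl mulr2n addrA.
have u_le : Lq_norm p q u <= A + N.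
  rewrite /u; apply: le_trans (minkowski_Lq_norm p_ge0 q_ge1 (fun=> A) _) _.
  by rewrite (Lq_norm_cst q_ge1 p_sum1) Lq_norm_abs (ger0_norm A_ge0).
have half_ge0 : 0 <= 2^-1 :> R by rewrite invr_ge0.
apply: le_trans (dGW_le_diag q _ _ p_ge0) _.
have := Lq_norm_pairs_le p_ge0 q_ge1 p_sum1 u_ge0 D_le.
move=> /(ler_wpM2l half_ge0) /le_trans; apply.
have two_neq0 : (2 : R) != 0 by rewrite pnatr_eq0.
rewrite mulrA (mulVf two_neq0) mul1r; apply: le_trans u_le _.
rewrite /A; set c := n%:R `^ _; nra.
Qed.
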